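(* Let $G$ be a graph with a vertex cover $X\subseteq V(G)$, $I=V(G)\setminus X$, $C\subseteq V(G)$, $\mathcal{B}=\{N_G[w]:w\in C\}$, and $k$ a positive integer. If $u,v\in I$ are distinct false twins with $N_G[u]\notin\mathcal{B}$ and $N_G[v]\notin\mathcal{B}$, then, with $G'=G-v$ and $\mathcal{B}'=\{N_{G'}[w]: w\in C\}$, we have NCTD$(\mathcal{B})\le k$ if and only if NCTD$(\mathcal{B}')\le k$.
   Context: $N_G(v)$ and $N_G[v]$ are the open and closed neighborhoods of $v$ in $G$; $u,v$ are false twins if $N(u)=N(v)$. A teaching map for $\mathcal{B}$ assigns to each $B\in\mathcal{B}$ a set $T(B)\subseteq V(G)$. A vertex $w$ distinguishes $B,B'$ if $w$ lies in exactly one of them. $T$ is non-clashing if for all distinct $B,B'\in\mathcal{B}$ some $w\in T(B)\cup T(B')$ distinguishes them; its size is $\max_{B\in\mathcal{B}}|T(B)|$. NCTD$(\mathcal{B})$ is the minimum size of a non-clashing teaching map for $\mathcal{B}$. *)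

From mathcomp Require Import all_boot.
Set Implicit Arguments. Unset Strict Implicit. Unset Printing Implicit Defensive.

(* A finite simple graph is given by a vertex type T (finite) and an edge
   relation e (assumed symmetric and irreflexive in the theorem).  A graph on
   vertex set V ⊆ T is the subgraph of (T, e) induced by V. *)

Definition nbhd (T : finType) (V : {set T}) (e : rel T) (w : T) : {set T} :=
  [set x in V | e w x].

Definition cnbhd (T : finType) (V : {set T}) (e : rel T) (w : T) : {set T} :=
  [set x in V | (x == w) || e w x].

Definition vertex_cover (T : finType) (e : rel T) (X : {set T}) : Prop :=
  forall x y, e x y -> (x \in X) || (y \in X).

Definition ball_family (T : finType) (V : {set T}) (e : rel T) (C : {set T})
  : {set {set T}} := [set cnbhd V e w | w in C].

Definition non_clashing (T : finType) (V : {set T}) (F : {set {set T}})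
  (TM : {ffun {set T} -> {set T}}) : bool :=
  [forall B in F, TM B \subset V] &&
  [forall B in F, forall B' in F,
     (B != B') ==> [exists w in TM B :|: TM B', (w \in B) (+) (w \in B')]].

Definition tm_size (T : finType) (F : {set {set T}})
  (TM : {ffun {set T} -> {set T}}) : nat := \max_(B in F) #|TM B|.

(* NCTD(F): minimum size of a non-clashing teaching map (a non-clashing map
   always exists, e.g. T(B) = V, so the default value #|T| is never the
   only candidate). *)
Definition NCTD (T : finType) (V : {set T}) (F : {set {set T}}) : nat :=
  \big[minn/#|T|]_(TM : {ffun {set T} -> {set T}} | non_clashing V F TM)
     tm_size F TM.

(* Since [N(u) = N(v)] and neither [u] nor [v] is a centre of a ball, every
   ball of [B] contains [v] exactly when it contains [u]; hence [B ↦ B \ v] is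
   a bijection from [B] onto [B'], inverted by adding [v] back to the sets
   containing [u].  A teaching map for [B'] is a teaching map for [B]
   verbatim, and a teaching map for [B] becomes one for [B'] after replacing
   [v] by its twin [u] in every teaching set.  Thus NCTD(B) = NCTD(B'). *)

From mathcomp Require Import all_boot.

Set Implicit Arguments.
Unset Strict Implicit.
Unset Printing Implicit Defensive.

Lemma bigminn_le_seq (I : eqType) (s : seq I) (P : pred I) (F : I -> nat) idx i0 :
  i0 \in s -> P i0 -> \big[minn/idx]_(i <- s | P i) F i <= F i0.
Proof.
elim: s => [//|j s IHs]; rewrite inE big_cons => /predU1P[<- ->|s_i0 P_i0].
  exact: geq_minl.
by case: (P j); rewrite ?geq_min (IHs s_i0 P_i0) ?orbT.
Qed.

Section TeachingDimension.

Variables (T : finType) (V : {set T}) (F : {set {set T}}).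

Lemma NCTD_le_size TM : non_clashing V F TM -> NCTD V F <= tm_size F TM.
Proof. exact: bigminn_le_seq (mem_index_enum TM). Qed.

Hypothesis F_sub : {in F, forall B : {set T}, B \subset V}.

Lemma non_clashing_full : non_clashing V F [ffun=> V].
Proof.
apply/andP; split; first by apply/forall_inP => B _; rewrite ffunE.
apply/forall_inP => B1 F_B1; apply/forall_inP => B2 F_B2; apply/implyP.
rewrite !ffunE setUid eqEsubset negb_and => /orP[] /subsetPn[x B_x B'_x].
  by apply/existsP; exists x; rewrite (subsetP (F_sub F_B1)) // B_x (negbTE B'_x).
by apply/existsP; exists x; rewrite (subsetP (F_sub F_B2)) // B_x (negbTE B'_x).
Qed.

Lemma NCTD_attained :
  exists2 TM, non_clashing V F TM & tm_size F TM <= NCTD V F.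
Proof.
rewrite /NCTD.
pose attained m := exists2 TM, non_clashing V F TM & tm_size F TM <= m.
apply: (big_ind attained) => [|m n [TM1 nc1 le1] [TM2 nc2 le2]|TM nc_TM].
- exists [ffun=> V]; first exact: non_clashing_full.
  by apply/bigmax_leqP => B _; rewrite ffunE max_card.
- by case/orP: (leq_total m n) => [/minn_idPl|/minn_idPr] ->; [exists TM1|exists TM2].
- by exists TM.
Qed.

End TeachingDimension.

Section Pullback.

Variables (T : finType) (V V' : {set T}) (F F' : {set {set T}}).
Variables (psi : {set T} -> {set T}) (g : T -> T).

Hypothesis psiF : {in F', forall B', psi B' \in F}.
Hypothesis psi_inj : {in F' &, injective psi}.
Hypothesis gV : {in V, forall x, g x \in V'}.
Hypothesis mem_g :
  {in F', forall B' : {set T}, {in V, forall x, (g x \in B') = (x \in psi B')}}.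

Definition pullback_tm (TM : {ffun {set T} -> {set T}}) : {ffun {set T} -> {set T}} :=
  [ffun B' => g @: TM (psi B')].

Lemma non_clashing_pullback TM :
  non_clashing V F TM -> non_clashing V' F' (pullback_tm TM).
Proof.
case/andP=> /forall_inP TM_sub /forall_inP nc.
apply/andP; split.
  apply/forall_inP => B' F'_B'; rewrite ffunE.
  apply/subsetP => _ /imsetP[x TM_x ->]; apply: gV.
  exact: subsetP (TM_sub _ (psiF F'_B')) x TM_x.
apply/forall_inP => B1 F'_B1; apply/forall_inP => B2 F'_B2; apply/implyP => B12.
have psiB12 : psi B1 != psi B2 by apply: contra B12 => /eqP/psi_inj->.
have /forall_inP/(_ _ (psiF F'_B2))/implyP/(_ psiB12) := nc _ (psiF F'_B1).
case/existsP=> x /andP[TM_x dist_x].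
have V_x : x \in V.
  by case/setUP: TM_x => /(subsetP (TM_sub _ (psiF _))) -> //.
apply/existsP; exists (g x); rewrite !ffunE (mem_g F'_B1) // (mem_g F'_B2) //.
rewrite dist_x andbT.
by case/setUP: TM_x => TM_x; apply/setUP; [left|right]; apply: imset_f.
Qed.

Lemma tm_size_pullback TM : tm_size F' (pullback_tm TM) <= tm_size F TM.
Proof.
apply/bigmax_leqP => B' F'_B'; rewrite ffunE.
apply: leq_trans (leq_imset_card _ _) _.
exact: leq_bigmax_cond (psiF F'_B').
Qed.

Lemma NCTD_pullback : {in F, forall B : {set T}, B \subset V} -> NCTD V' F' <= NCTD V F.
Proof.
move=> F_sub; have [TM nc_TM /(leq_trans (tm_size_pullback TM))] := NCTD_attained F_sub.
exact/leq_trans/NCTD_le_size/non_clashing_pullback.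
Qed.

End Pullback.

Lemma cnbhd_sub (T : finType) (V : {set T}) (e : rel T) w : cnbhd V e w \subset V.
Proof. by apply/subsetP => x; rewrite inE => /andP[]. Qed.

Lemma ball_family_sub (T : finType) (V : {set T}) (e : rel T) (C : {set T}) :
  {in ball_family V e C, forall B : {set T}, B \subset V}.
Proof. by move=> _ /imsetP[w _ ->]; apply: cnbhd_sub. Qed.

Lemma ball_family_setD1 (T : finType) (V : {set T}) (e : rel T) (C : {set T}) v :
  ball_family (V :\ v) e C = [set B :\ v | B in ball_family V e C].
Proof.
rewrite /ball_family -imset_comp; apply: eq_imset => w /=.
by apply/setP => x; rewrite !inE andbA.
Qed.

Section FalseTwins.

Variables (T : finType) (e : rel T) (C : {set T}) (u v : T).
Hypotheses (e_sym : symmetric e) (uv : u != v).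
Hypotheses (twins : nbhd [set: T] e u = nbhd [set: T] e v).
Hypotheses (uC : u \notin C) (vC : v \notin C).

Local Notation F := (ball_family [set: T] e C).
Local Notation F' := (ball_family ([set: T] :\ v) e C).

Lemma mem_ball_twin : {in F, forall B : {set T}, (v \in B) = (u \in B)}.
Proof.
move=> _ /imsetP[w Cw ->]; move/setP/(_ w): twins; rewrite !inE /= => euv.
have vw : v != w by apply: contraNneq vC => ->.
have uw : u != w by apply: contraNneq uC => ->.
by rewrite (negbTE vw) (negbTE uw) !(e_sym w) euv.
Qed.

Definition add_twin (S : {set T}) : {set T} := if u \in S then v |: S else S.

Lemma add_twinK : {in F, cancel (fun B => B :\ v) add_twin}.
Proof.
move=> B F_B /=; rewrite /add_twin in_setD1 uv -mem_ball_twin //=.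
case: ifPn => [v_B|v_B]; first exact: setD1K.
by apply/setDidPl; rewrite disjoint_sym disjoints1.
Qed.

Lemma add_twinKV : {in F', cancel add_twin (fun B => B :\ v)}.
Proof.
move=> B'; rewrite ball_family_setD1 => /imsetP[B F_B ->] /=.
by rewrite add_twinK.
Qed.

Lemma NCTD_delete_twin_le : NCTD ([set: T] :\ v) F' <= NCTD [set: T] F.
Proof.
pose g x := if x == v then u else x.
apply: (@NCTD_pullback _ _ _ _ _ add_twin g); last exact: ball_family_sub.
- move=> B'; rewrite ball_family_setD1 => /imsetP[B F_B ->].
  by rewrite add_twinK.
- exact: can_in_inj add_twinKV.
- by move=> x _; rewrite /g !inE andbT; case: (eqVneq x v).
- move=> B'; rewrite ball_family_setD1 => /imsetP[B F_B ->] x _.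
  rewrite add_twinK // /g in_setD1; case: (eqVneq x v) => [->|->] //.
  by rewrite uv (mem_ball_twin F_B).
Qed.

Lemma NCTD_delete_twin_ge : NCTD [set: T] F <= NCTD ([set: T] :\ v) F'.
Proof.
apply: (@NCTD_pullback _ _ _ _ _ (fun B => B :\ v) id); last exact: ball_family_sub.
- by move=> B F_B; rewrite ball_family_setD1; apply: imset_f.
- exact: can_in_inj add_twinK.
- by move=> x _; rewrite inE.
- by move=> B _ x; rewrite !inE => /andP[-> _].
Qed.

Lemma NCTD_delete_twin : NCTD ([set: T] :\ v) F' = NCTD [set: T] F.
Proof. by apply/eqP; rewrite eqn_leq NCTD_delete_twin_le NCTD_delete_twin_ge. Qed.

End FalseTwins.

Theorem lemma6 (T : finType) (e : rel T) (e_sym : symmetric e)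
  (e_irr : irreflexive e) (X C : {set T}) (k : nat) (u v : T) :
  vertex_cover e X -> 0 < k ->
  u \in ~: X -> v \in ~: X -> u != v ->
  nbhd [set: T] e u = nbhd [set: T] e v ->
  cnbhd [set: T] e u \notin ball_family [set: T] e C ->
  cnbhd [set: T] e v \notin ball_family [set: T] e C ->
  (NCTD [set: T] (ball_family [set: T] e C) <= k <->
   NCTD ([set: T] :\ v) (ball_family ([set: T] :\ v) e C) <= k).
Proof.
move=> _ _ _ _ uv twins Bu Bv.
have uC : u \notin C by apply: contra Bu; apply: imset_f.
have vC : v \notin C by apply: contra Bv; apply: imset_f.
by rewrite (NCTD_delete_twin e_sym uv twins uC vC).
Qed.
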